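(* Let $f:\mathbb{R}^n_{>0}\to\mathbb{R}^n_{>0}$ be order-preserving and homogeneous. Suppose $f$ has an eigenvector $u\in\mathbb{R}^n_{>0}$ with $\|u\|=1$ and $f$ is differentiable at $u$. If $\mathcal{G}(f'(u))$ has a unique final class, then every eigenvector of $f$ in $\mathbb{R}^n_{>0}$ is a scalar multiple of $u$. If, in addition, this final class is primitive, then $\lim_{k\to\infty}f^k(x)/\|f^k(x)\|=u$ for all $x\in\mathbb{R}^n_{>0}$.
   Context: $\|\cdot\|$ is a norm on $\mathbb{R}^n$; entrywise order. Order-preserving: $x\le y\Rightarrow f(x)\le f(y)$; homogeneous: $f(tx)=tf(x)$ for $t>0$. $f'(u)$ is the Jacobian matrix (a nonnegative matrix). For a nonnegative $n\times n$ matrix $A=[a_{ij}]$, $\mathcal{G}(A)$ is the directed graph on $[n]=\{1,\dots,n\}$ with an arc $i\to j$ when $a_{ij}\neq0$. A final class is a strongly connected component with no arcs leaving it. A strongly connected component is primitive if there is $m\in\mathbb{N}$ such that every ordered pair of its vertices is joined by a path of length exactly $m$. *)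

From HB Require Import structures.
From mathcomp Require Import all_boot all_order all_algebra.
From mathcomp Require Import all_classical all_reals all_analysis.
Set Implicit Arguments. Unset Strict Implicit. Unset Printing Implicit Defensive.
Import Order.TTheory GRing.Theory Num.Theory.
Import numFieldNormedType.Exports.
Local Open Scope ring_scope.

Section Defs.
Variable R : realType.
Variable n : nat.

Definition pos_vec (x : 'rV[R]_n) : Prop := forall i, 0 < x 0 i.

Definition le_vec (x y : 'rV[R]_n) : Prop := forall i, x 0 i <= y 0 i.

Definition is_norm (N : 'rV[R]_n -> R) : Prop :=
  [/\ forall x, 0 <= N x,
      forall x, N x = 0 -> x = 0,
      forall (a : R) x, N (a *: x) = `|a| * N x
    & forall x y, N (x + y) <= N x + N y].

Definition maps_pos (f : 'rV[R]_n -> 'rV[R]_n) : Prop :=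
  forall x, pos_vec x -> pos_vec (f x).

Definition order_preserving (f : 'rV[R]_n -> 'rV[R]_n) : Prop :=
  forall x y, pos_vec x -> pos_vec y -> le_vec x y -> le_vec (f x) (f y).

Definition homogeneous (f : 'rV[R]_n -> 'rV[R]_n) : Prop :=
  forall (t : R) x, 0 < t -> pos_vec x -> f (t *: x) = t *: f x.

Definition pos_eigenvector (f : 'rV[R]_n -> 'rV[R]_n) (v : 'rV[R]_n) : Prop :=
  pos_vec v /\ exists lambda : R, f v = lambda *: v.

(* Jacobian matrix f'(u) with entries (f'(u))_{ij} = d f_i / d x_j.
   MathComp-Analysis' 'J f u = lin1_mx ('d f u) has entry (i,j) = d f_j / d x_i,
   hence the transpose. *)
Definition jac (f : 'rV[R]_n -> 'rV[R]_n) (u : 'rV[R]_n) : 'M[R]_n :=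
  ('J f u)^T.

Definition arc (A : 'M[R]_n) : rel 'I_n := fun i j => A i j != 0.

Definition reach (A : 'M[R]_n) (i j : 'I_n) : Prop :=
  exists p : seq 'I_n, path (arc A) i p /\ last i p = j.

Definition walk_len (A : 'M[R]_n) (m : nat) (i j : 'I_n) : Prop :=
  exists p : seq 'I_n, [/\ size p = m, path (arc A) i p & last i p = j].

Definition scc (A : 'M[R]_n) (C : {set 'I_n}) : Prop :=
  [/\ exists i, i \in C,
      forall i j, i \in C -> j \in C -> reach A i j
    & forall i j, i \in C -> reach A i j -> reach A j i -> j \in C].

Definition final_class (A : 'M[R]_n) (C : {set 'I_n}) : Prop :=
  scc A C /\ forall i j, i \in C -> arc A i j -> j \in C.

Definition primitive_class (A : 'M[R]_n) (C : {set 'I_n}) : Prop :=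
  exists m : nat, (0 < m)%N /\ forall i j, i \in C -> j \in C -> walk_len A m i j.

End Defs.

(* Strict increase propagates backwards along the arcs of G(f'(u)): if
   u <= y, u_j < y_j and i -> j, then f(u)_i < f(y)_i, for otherwise f_i would
   be constant on the segment from u in direction e_j and the entry
   df_i/dx_j(u) would vanish.  Hence, for a positive eigenvector v, the
   coordinates where v touches its largest multiple of u below it (and its
   smallest multiple above it) form a set closed under arcs, which contains
   the unique final class C; both multiples agree on C, so v is a multiple
   of u.

   For the convergence, replace f by g = f / lambda, which fixes u and leaves
   every order interval [a u, b u] invariant.  Primitivity of C gives a
   length p such that every vertex has a walk of length p into a fixed
   c in C, so g^p pushes y strictly above its lower contact multiple of u as
   soon as y lies strictly above it at c (and dually).  A cluster point y of
   the bounded orbit of x therefore touches both contact multiples at c,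
   i.e. y = s u, and the invariance of thin intervals around s u turns the
   cluster point into a limit. *)

From Pilot Require Import Defs.
From HB Require Import structures.
From mathcomp Require Import all_boot all_order all_algebra.
From mathcomp Require Import all_classical all_reals all_analysis.
From mathcomp Require Import ring lra zify.
Set Implicit Arguments. Unset Strict Implicit. Unset Printing Implicit Defensive.
Import Order.TTheory GRing.Theory Num.Theory.
Import numFieldNormedType.Exports.
Local Open Scope ring_scope.

Section Graph.
Variables (R : realType) (n : nat) (A : 'M[R]_n).
Local Notation e := (Defs.arc A).
Implicit Types (S : {set 'I_n}) (i j : 'I_n).

Definition arc_closed (S : {set 'I_n}) := forall i j, i \in S -> e i j -> j \in S.

Lemma reachP i j : reach A i j <-> connect e i j.
Proof.
by split=> [[p [ep <-]]|/connectP[p ep ->]]; [apply/connectP; exists p | exists p].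
Qed.

Lemma arc_closed_connect S i j : arc_closed S -> i \in S -> connect e i j -> j \in S.
Proof.
move=> Scl + /connectP[p ep ->]; elim: p i ep => [//|k p IH] i /= /andP[eik ep] iS.
exact: IH ep (Scl _ _ iS eik).
Qed.

Lemma arc_closed_connect_set i : arc_closed [set j | connect e i j].
Proof. by move=> j k; rewrite !inE => ij /connect1; exact: connect_trans. Qed.

(* A vertex of [S] whose reachable set is smallest spans a final class. *)
Lemma arc_closed_final S i0 : i0 \in S -> arc_closed S ->
  exists2 C, final_class A C & C \subset S.
Proof.
move=> i0S Scl.
pose Rs i := [set j | connect e i j].
have [i iS Rmin] := arg_minnP (fun i => #|Rs i|) i0S.
have Rs_eq j : j \in Rs i -> Rs j = Rs i.
  rewrite inE => ij; apply/eqP; rewrite eqEcard Rmin ?andbT.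
    by apply/fintype.subsetP => k; rewrite !inE; exact: connect_trans.
  exact: arc_closed_connect Scl iS ij.
exists (Rs i).
  split; last exact: arc_closed_connect_set.
  split.
  - by exists i; rewrite inE connect0.
  - by move=> j k jC; rewrite -(Rs_eq j jC) inE => /reachP.
  - by move=> j k; rewrite !inE => ij /reachP jk _; exact: connect_trans jk.
by apply/fintype.subsetP => j; rewrite inE; exact: arc_closed_connect Scl iS.
Qed.

Lemma walk_len_cat a b i j k :
  walk_len A a i j -> walk_len A b j k -> walk_len A (a + b) i k.
Proof.
move=> [p [<- ep <-]] [q [<- eq <-]].
by exists (p ++ q); rewrite size_cat cat_path last_cat ep eq.
Qed.

Lemma walk_len0 i : walk_len A 0 i i.
Proof. by exists [::]. Qed.

Lemma walk_len1 i j : e i j -> walk_len A 1 i j.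
Proof. by move=> ij; exists [:: j]; rewrite /= ij. Qed.

Lemma final_primitive_walk C c :
  final_class A C -> primitive_class A C -> c \in C ->
  exists m, forall q d, (m <= q)%N -> d \in C -> walk_len A q d c.
Proof.
move=> [_ Cout] [m [m0 Cwalk]] cC; exists m.
have step d : d \in C -> exists2 d', d' \in C & e d d'.
  move=> dC; have [[|d' p] [sp /= + _]] := Cwalk d d dC dC.
    by rewrite -sp in m0.
  by case/andP=> dd' _; exists d' => //; exact: Cout dd'.
have walk_in r d : d \in C -> exists2 d', d' \in C & walk_len A r d d'.
  elim: r d => [|r IH] d dC; first by exists d => //; exact: walk_len0.
  have [d' d'C w] := IH d dC; have [d'' d''C ed'] := step d' d'C.
  by exists d'' => //; rewrite -addn1; exact: walk_len_cat w (walk_len1 ed').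
move=> q d mq dC; have [d' d'C w] := walk_in (q - m)%N d dC.
by rewrite -(subnK mq); exact: walk_len_cat w (Cwalk _ _ d'C cC).
Qed.

Section UniqueFinal.
Variable C : {set 'I_n}.
Hypotheses (Cfin : final_class A C) (Cuniq : exists! C, final_class A C).

Lemma final_class_uniq C' : final_class A C' -> C' = C.
Proof.
by case: Cuniq => C0 [_ uniq] C'fin; rewrite -(uniq _ C'fin) (uniq _ Cfin).
Qed.

Lemma final_class_sub_closed S i0 : i0 \in S -> arc_closed S -> C \subset S.
Proof.
by move=> i0S Scl; have [C' /final_class_uniq <-] := arc_closed_final i0S Scl.
Qed.

Lemma connect_final_class i : exists2 c, c \in C & connect e i c.
Proof.
have iR : i \in [set j | connect e i j] by rewrite inE connect0.
have [[[c cC] _ _] _] := Cfin; exists c => //.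
have /fintype.subsetP/(_ c cC) := final_class_sub_closed iR (@arc_closed_connect_set i).
by rewrite inE.
Qed.

Lemma unique_final_primitive_walk c : primitive_class A C -> c \in C ->
  exists p, forall i, walk_len A p i c.
Proof.
move=> Cprim cC; have [m Cwalk] := final_primitive_walk Cfin Cprim cC.
have walk_from i : exists K, forall q, (K <= q)%N -> walk_len A q i c.
  have [c' c'C /connectP[s es ls]] := connect_final_class i.
  exists (size s + m)%N => q Kq; rewrite -(subnKC (leq_trans (leq_addr m _) Kq)).
  by apply: walk_len_cat (Cwalk _ _ _ c'C); [exists s | lia].
have [K HK] := fin_all_exists walk_from.
by exists (\max_i K i)%N => i; apply: HK; exact: leq_bigmax.
Qed.

End UniqueFinal.
End Graph.

Local Open Scope classical_set_scope.

Section PositiveCone.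
Variables (R : realType) (n : nat).
Implicit Types (u x y z : 'rV[R]_n) (a b t : R).

Lemma le_vec_trans y x z : le_vec x y -> le_vec y z -> le_vec x z.
Proof. by move=> xy yz i; exact: le_trans (xy i) (yz i). Qed.

Lemma le_vecZ t x y : 0 <= t -> le_vec x y -> le_vec (t *: x) (t *: y).
Proof. by move=> t0 xy i; rewrite !mxE ler_wpM2l. Qed.

Lemma pos_vecZ t x : 0 < t -> pos_vec x -> pos_vec (t *: x).
Proof. by move=> t0 xpos i; rewrite mxE mulr_gt0. Qed.

Lemma lower_contact (i0 : 'I_n) u y : pos_vec u -> pos_vec y ->
  exists a k, [/\ 0 < a, le_vec (a *: u) y & y 0 k = a * u 0 k].
Proof.
move=> upos ypos.
have [k _ kmin] := @arg_minP _ _ _ i0 xpredT (fun i => y 0 i / u 0 i) isT.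
exists (y 0 k / u 0 k), k; split; first by rewrite divr_gt0.
  by move=> i; rewrite mxE -ler_pdivlMr ?kmin.
by rewrite divfK ?gt_eqF.
Qed.

Lemma upper_contact (i0 : 'I_n) u y : pos_vec u -> pos_vec y ->
  exists b k, [/\ 0 < b, le_vec y (b *: u) & y 0 k = b * u 0 k].
Proof.
move=> upos ypos.
have [k _ kmax] := @arg_maxP _ _ _ i0 xpredT (fun i => y 0 i / u 0 i) isT.
exists (y 0 k / u 0 k), k; split; first by rewrite divr_gt0.
  by move=> i; rewrite mxE -ler_pdivrMr //; exact: kmax.
by rewrite divfK ?gt_eqF.
Qed.

Lemma contacts_eq_scale c a b u y : 0 < u 0 c ->
  le_vec (a *: u) y -> le_vec y (b *: u) -> y 0 c = a * u 0 c -> y 0 c = b * u 0 c ->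
  y = a *: u.
Proof.
move=> uc0 ay yb yca ycb.
have ab : b = a by apply: (mulIf (lt0r_neq0 uc0)); rewrite -ycb.
apply/rowP => i; apply/le_anti; rewrite ay andbT.
by have := yb i; rewrite ab mxE.
Qed.

(* [z] lies in the order interval [r y, y / r]: closeness in Thompson's metric. *)
Definition cone_close (r : R) y z := le_vec (r *: y) z /\ le_vec (r *: z) y.

Lemma near_cone_close r y : 0 < r < 1 -> pos_vec y ->
  \forall z \near y, cone_close r y z.
Proof.
case/andP=> r0 r1 ypos.
have near_lo i : \forall z \near y, r * y 0 i < (z : 'rV[R]_n) 0 i.
  by apply: (cvgr_gt _ (@coord_continuous R 1 n 0 i y)); rewrite gtr_pMl.
have near_hi i : \forall z \near y, (z : 'rV[R]_n) 0 i < r^-1 * y 0 i.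
  by apply: (cvgr_lt _ (@coord_continuous R 1 n 0 i y)); rewrite ltr_pMl ?invf_gt1.
have [lo hi] := (filter_forall _ near_lo, filter_forall _ near_hi).
near=> z.
have zlo : forall i, r * y 0 i < z 0 i by near: z.
have zhi : forall i, z 0 i < r^-1 * y 0 i by near: z.
by split=> i; rewrite mxE; [exact/ltW | rewrite -ler_pdivlMl // ltW].
Unshelve. all: by end_near.
Qed.

Lemma cone_close_cvg {T : Type} (F : set_system T) {FF : Filter F}
    (z : T -> 'rV[R]_n) y : pos_vec y ->
  (forall r, 0 < r < 1 -> \forall t \near F, cone_close r y (z t)) -> z @ F --> y.
Proof.
move=> ypos zF; apply/cvg_ballP => e e0.
pose Y := 1 + \sum_i y 0 i.
have Y0 : 0 < Y by rewrite ltr_wpDr // sumr_ge0 // => i _; exact/ltW.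
have yY i : y 0 i < Y.
  rewrite /Y (bigD1 i) //= addrCA ltr_pwDr //.
  by rewrite ltr_wpDr // sumr_ge0 // => j _; exact/ltW.
pose r := Y / (Y + e / 2).
have Ye0 : 0 < Y + e / 2 by rewrite addr_gt0 ?divr_gt0.
have r0 : 0 < r by rewrite divr_gt0.
have r1 : r < 1 by rewrite ltr_pdivrMr // mul1r ltrDl divr_gt0.
have rY : (1 - r) * Y = r * (e / 2).
  by rewrite /r; field; rewrite lt0r_neq0 // addr_gt0 ?mulr_gt0.
near=> t.
have [zlo zhi] : cone_close r y (z t) by near: t; apply: zF; rewrite r0 r1.
split=> // i j; rewrite ord1 /ball /= ltr_norml.
have := zlo j; have := zhi j; rewrite !mxE => zyj yzj.
have gap : (1 - r) * y 0 j <= r * (e / 2).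
  by rewrite -rY ler_wpM2l ?subr_ge0 ?ltW.
have zy : z t 0 j - y 0 j <= e / 2.
  by rewrite -(ler_pM2l r0) mulrBr (le_trans _ gap) // mulrBl mul1r lerD2r.
have re : r * (e / 2) < e / 2 by rewrite gtr_pMl ?divr_gt0.
apply/andP; split; nra.
Unshelve. all: by end_near.
Qed.

End PositiveCone.

Section Iterates.
Variables (R : realType) (n : nat) (g : 'rV[R]_n -> 'rV[R]_n).
Hypotheses (gpos : maps_pos g) (gop : order_preserving g) (ghom : homogeneous g).

Lemma maps_pos_iter k : maps_pos (iter k g).
Proof. by elim: k => [|k IH] x xpos //=; apply/gpos/IH. Qed.

Lemma order_preserving_iter k : order_preserving (iter k g).
Proof.
elim: k => [|k IH] x y xpos ypos xy //=.
by apply: gop; [exact: maps_pos_iter | exact: maps_pos_iter | exact: IH].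
Qed.

Lemma homogeneous_iter k : homogeneous (iter k g).
Proof.
elim: k => [|k IH] t x t0 xpos //=.
by rewrite IH // ghom //; exact: maps_pos_iter.
Qed.

Variable u : 'rV[R]_n.
Hypotheses (upos : pos_vec u) (gu : g u = u).

Lemma iter_lower_bound k t y : 0 < t -> pos_vec y ->
  le_vec (t *: u) y -> le_vec (t *: u) (iter k g y).
Proof.
move=> t0 ypos tuy; rewrite -(iter_fix k gu) -homogeneous_iter //.
by apply: order_preserving_iter => //; exact: pos_vecZ.
Qed.

Lemma iter_upper_bound k t y : 0 < t -> pos_vec y ->
  le_vec y (t *: u) -> le_vec (iter k g y) (t *: u).
Proof.
move=> t0 ypos ytu; rewrite -(iter_fix k gu) -homogeneous_iter //.
by apply: order_preserving_iter => //; exact: pos_vecZ.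
Qed.

Section Walks.
Variable A : 'M[R]_n.

Lemma walk_iter_lt_up :
  (forall i j y, pos_vec y -> le_vec u y -> Defs.arc A i j -> u 0 j < y 0 j ->
     u 0 i < g y 0 i) ->
  forall p i j y, walk_len A p i j -> pos_vec y -> le_vec u y -> u 0 j < y 0 j ->
  u 0 i < iter p g y 0 i.
Proof.
move=> step; elim=> [|p IH] i j y [[|k s] [//= sp walk <-]] ypos uy uyj //.
case/andP: walk => ik walk; apply: step ik _; first exact: maps_pos_iter.
  by rewrite -(iter_fix p gu); exact: order_preserving_iter.
by apply: IH uyj => //; exists s; split; case: sp.
Qed.

Lemma walk_iter_lt_down :
  (forall i j y, pos_vec y -> le_vec y u -> Defs.arc A i j -> y 0 j < u 0 j ->
     g y 0 i < u 0 i) ->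
  forall p i j y, walk_len A p i j -> pos_vec y -> le_vec y u -> y 0 j < u 0 j ->
  iter p g y 0 i < u 0 i.
Proof.
move=> step; elim=> [|p IH] i j y [[|k s] [//= sp walk <-]] ypos yu yuj //.
case/andP: walk => ik walk; apply: step ik _; first exact: maps_pos_iter.
  by rewrite -[X in le_vec _ X](iter_fix p gu); exact: order_preserving_iter.
by apply: IH yuj => //; exists s; split; case: sp.
Qed.

End Walks.
End Iterates.

Section ScaledMap.
Variables (R : realType) (n : nat) (f : 'rV[R]_n -> 'rV[R]_n) (t : R).
Hypotheses (t0 : 0 < t) (fpos : maps_pos f) (fop : order_preserving f)
  (fhom : homogeneous f).

Lemma maps_posZ : maps_pos (fun x => t *: f x).
Proof. by move=> x xpos; apply/pos_vecZ/fpos. Qed.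

Lemma order_preservingZ : order_preserving (fun x => t *: f x).
Proof. by move=> x y xpos ypos xy; apply/le_vecZ/fop; rewrite ?ltW. Qed.

Lemma homogeneousZ : homogeneous (fun x => t *: f x).
Proof. by move=> s x s0 xpos; rewrite fhom // !scalerA mulrC. Qed.

Lemma iterZ k x : pos_vec x -> iter k (fun x => t *: f x) x = t ^+ k *: iter k f x.
Proof.
move=> xpos; elim: k => [|k IH] /=; first by rewrite scale1r.
rewrite IH fhom ?exprn_gt0 //; last exact: maps_pos_iter.
by rewrite !scalerA exprS.
Qed.

End ScaledMap.

Section Norm.
Variables (R : realType) (n : nat) (N : 'rV[R]_n -> R).
Hypothesis HN : is_norm N.

Lemma normZ a x : N (a *: x) = `|a| * N x.
Proof. by case: HN. Qed.

Lemma norm_ge0 x : 0 <= N x.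
Proof. by case: HN. Qed.

Lemma norm_triangle x y : N (x + y) <= N x + N y.
Proof. by case: HN. Qed.

Lemma norm_row_le w : N w <= \sum_(j < n) `|w 0 j| * N (delta_mx 0 j).
Proof.
rewrite {1}(row_sum_delta w).
elim/big_rec2: _ => [|j s x _ IH].
  by rewrite -(scale0r (0 : 'rV[R]_n)) normZ normr0 mul0r.
by rewrite (le_trans (norm_triangle _ _)) // normZ lerD2l.
Qed.

Lemma norm_dist_le x y : `|N x - N y| <= N (x - y).
Proof.
have Nyx : N (y - x) = N (x - y) by rewrite -opprB -scaleN1r normZ normrN normr1 mul1r.
have := norm_triangle (x - y) y; have := norm_triangle (y - x) x.
by rewrite !subrK Nyx ler_norml => ? ?; apply/andP; split; lra.
Qed.

Lemma norm_continuous : continuous N.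
Proof.
move=> x; apply/(@cvgrPdist_lt _ _ _ _ (nbhs_filter x)) => e e0.
pose K := 1 + \sum_(j < n) N (delta_mx 0 j).
have K0 : 0 < K by rewrite ltr_wpDr // sumr_ge0 // => j _; exact: norm_ge0.
near=> y.
have xy : forall j, `|x 0 j - y 0 j| < e / K.
  near: y; apply: filter_forall => j.
  by apply: (cvgr_dist_lt _ _ (@coord_continuous R 1 n 0 j x)); rewrite divr_gt0.
apply: le_lt_trans (norm_dist_le x y) _; apply: le_lt_trans (norm_row_le _) _.
apply: (@le_lt_trans _ _ (e / K * (K - 1))).
  rewrite /K addrAC subrr add0r mulr_sumr; apply: ler_sum => j _.
  by rewrite ler_wpM2r ?norm_ge0 // !mxE ltW.
have := divr_gt0 e0 K0; rewrite mulrBr mulr1 divfK ?lt0r_neq0 //; lra.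
Unshelve. all: by end_near.
Qed.

Lemma normalize_scale t x : 0 < t -> (N (t *: x))^-1 *: (t *: x) = (N x)^-1 *: x.
Proof.
move=> t0; rewrite normZ gtr0_norm // invfM scalerA mulrAC mulVf ?mul1r //.
exact: lt0r_neq0.
Qed.

Lemma normalize_cvg {T : Type} (F : set_system T) {FF : Filter F}
    (z : T -> 'rV[R]_n) y : N y != 0 -> z @ F --> y ->
  (fun t => (N (z t))^-1 *: z t) @ F --> (N y)^-1 *: y.
Proof.
move=> Ny zy; apply: (cvgZ _ zy); apply: cvgV => //.
by apply: continuous_cvg zy; exact: norm_continuous.
Qed.

End Norm.

Section Jacobian.
Variables (R : realType) (n : nat) (f : 'rV[R]_n -> 'rV[R]_n) (u : 'rV[R]_n).
Hypothesis df : differentiable f u.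

Lemma jacobian_flat_entry v i d : 0 < d ->
  (forall h, 0 < h <= d -> f (h *: v + u) 0 i = f u 0 i) -> (v *m 'J f u) 0 i = 0.
Proof.
move=> d0 flat; rewrite -deriveEjacobian //.
have Dvi : (fun h => (h^-1 *: ((f \o shift u) (h *: v) - f u)) 0 i) @ 0^' -->
    ('D_v f u) 0 i.
  have := @continuous_cvg _ _ _ _ _ _ (fun M : 'rV[R]_n => M 0 i) _
    (@coord_continuous R 1 n 0 i _) (@diff_derivable _ _ _ f u v df).
  by rewrite /derive; apply.
apply: (cvg_unique (@Rhausdorff R) (cvg_dnbhs_at_right Dvi) (cvg_near_cst 0 _)).
near=> h; rewrite /= !mxE flat ?subrr ?mulr0 //; apply/andP; split.
  by near: h; exact: nbhs_right_gt.
by near: h; exact: nbhs_right_le.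
Unshelve. all: by end_near.
Qed.

Hypothesis fop : order_preserving f.

Lemma jacobian_flat_interval x y v i d : pos_vec x -> le_vec x u -> le_vec u y ->
  f x 0 i = f y 0 i -> 0 < d ->
  (forall h, 0 < h <= d -> le_vec x (h *: v + u) /\ le_vec (h *: v + u) y) ->
  (v *m 'J f u) 0 i = 0.
Proof.
move=> xpos xu uy fxy d0 seg; apply: (jacobian_flat_entry d0) => h /seg[xw wy].
have pos_above w : le_vec x w -> pos_vec w.
  by move=> xw' k; exact: lt_le_trans (xw' k).
have squeeze w : le_vec x w -> le_vec w y -> f w 0 i = f x 0 i.
  move=> xw' wy'; have ypos := pos_above _ (le_vec_trans xw' wy').
  apply/le_anti; rewrite (fop xpos (pos_above _ xw') xw') andbT fxy.
  exact: fop (pos_above _ xw') ypos wy' i.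
by rewrite !squeeze // => k; rewrite ?(xu k) ?(uy k).
Qed.

Lemma jac_entry i j : jac f u i j = ((delta_mx 0 j : 'rV[R]_n) *m 'J f u) 0 i.
Proof. by rewrite /jac mxE -rowE [RHS]mxE. Qed.

Lemma delta_shift_entry (s : R) j k :
  (s *: (delta_mx 0 j : 'rV[R]_n) + u) 0 k = u 0 k + (k == j)%:R * s.
Proof. by rewrite !mxE eqxx /= addrC mulrC. Qed.

Lemma jac_arc_lt_up y i j : pos_vec u -> pos_vec y -> le_vec u y ->
  Defs.arc (jac f u) i j -> u 0 j < y 0 j -> f u 0 i < f y 0 i.
Proof.
move=> upos ypos uy aij uyj; rewrite lt_neqAle (fop upos ypos uy i) andbT.
move: aij; apply: contra_neq => fuy; rewrite jac_entry.
apply: (jacobian_flat_interval upos _ uy fuy (d := y 0 j - u 0 j)) => //.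
  by rewrite subr_gt0.
move=> h /andP[h0 hd]; split=> k; rewrite delta_shift_entry; case: eqP => [->|_];
  rewrite ?mul0r ?addr0 ?mul1r //; lra.
Qed.

Lemma jac_arc_lt_down y i j : pos_vec u -> pos_vec y -> le_vec y u ->
  Defs.arc (jac f u) i j -> y 0 j < u 0 j -> f y 0 i < f u 0 i.
Proof.
move=> upos ypos yu aij yuj; rewrite lt_neqAle (fop ypos upos yu i) andbT.
move: aij; apply: contra_neq => fyu; rewrite jac_entry -[_ *m _]opprK -mulNmx mxE.
rewrite (jacobian_flat_interval ypos yu _ fyu (d := u 0 j - y 0 j)) ?oppr0 //.
  by rewrite subr_gt0.
move=> h /andP[h0 hd]; rewrite scalerN -scaleNr.
split=> k; rewrite delta_shift_entry; case: eqP => [->|_];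
  rewrite ?mul0r ?addr0 ?mul1r //; lra.
Qed.

End Jacobian.

Section Eigenvectors.
Variables (R : realType) (n : nat) (f : 'rV[R]_n -> 'rV[R]_n).
Hypotheses (fop : order_preserving f) (fhom : homogeneous f).

Lemma eigenvalue_le (i0 : 'I_n) u v (lam mu : R) : pos_vec u -> pos_vec v ->
  f u = lam *: u -> f v = mu *: v -> lam <= mu.
Proof.
move=> upos vpos fu fv; have [a [k [a0 av vk]]] := lower_contact i0 upos vpos.
have := fop (pos_vecZ a0 upos) vpos av k.
by rewrite fhom // fu fv !mxE vk mulrCA ler_pM2r ?mulr_gt0.
Qed.

Variables (u : 'rV[R]_n) (lam : R).
Hypotheses (upos : pos_vec u) (fu : f u = lam *: u) (df : differentiable f u).
Variable C : {set 'I_n}.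
Hypotheses (Cfin : final_class (jac f u) C)
  (Cuniq : exists! C, final_class (jac f u) C).

Lemma eq_on_final_above w k : pos_vec w -> le_vec u w -> w 0 k = u 0 k ->
  f w = lam *: w -> {in C, forall c, w 0 c = u 0 c}.
Proof.
move=> wpos uw wk fw; pose S := [set i | w 0 i == u 0 i]%SET.
have Scl : arc_closed (jac f u) S.
  move=> i j; rewrite !inE => /eqP wi aij; apply: contraT => wj.
  have := jac_arc_lt_up df fop upos wpos uw aij.
  by rewrite lt_neqAle eq_sym wj uw fu fw !mxE wi ltxx => /(_ isT).
have /fintype.subsetP CS : C \subset S.
  by apply: (final_class_sub_closed Cfin Cuniq (i0 := k)) Scl; rewrite inE wk.
by move=> c /CS; rewrite inE => /eqP.
Qed.

Lemma eq_on_final_below w k : pos_vec w -> le_vec w u -> w 0 k = u 0 k ->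
  f w = lam *: w -> {in C, forall c, w 0 c = u 0 c}.
Proof.
move=> wpos wu wk fw; pose S := [set i | w 0 i == u 0 i]%SET.
have Scl : arc_closed (jac f u) S.
  move=> i j; rewrite !inE => /eqP wi aij; apply: contraT => wj.
  have := jac_arc_lt_down df fop upos wpos wu aij.
  by rewrite lt_neqAle wj wu fu fw !mxE wi ltxx => /(_ isT).
have /fintype.subsetP CS : C \subset S.
  by apply: (final_class_sub_closed Cfin Cuniq (i0 := k)) Scl; rewrite inE wk.
by move=> c /CS; rewrite inE => /eqP.
Qed.

Lemma pos_eigenvector_scale v : pos_eigenvector f v -> exists t, v = t *: u.
Proof.
case=> vpos [mu fv]; have [[[c cC] _ _] _] := Cfin.
have mu_lam : mu = lam.
  apply/le_anti.
  by rewrite (eigenvalue_le c vpos upos fv fu) (eigenvalue_le c upos vpos fu fv).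
rewrite {}mu_lam in fv.
have fZv t : 0 < t -> f (t *: v) = lam *: (t *: v).
  by move=> t0; rewrite fhom // fv !scalerA mulrC.
have [a [k [a0 av vk]]] := lower_contact c upos vpos.
have [b [l [b0 vb vl]]] := upper_contact c upos vpos.
have a'0 : 0 < a^-1 by rewrite invr_gt0.
have b'0 : 0 < b^-1 by rewrite invr_gt0.
have vca : v 0 c = a * u 0 c.
  have uw : le_vec u (a^-1 *: v).
    by move=> i; rewrite mxE ler_pdivlMl //; have := av i; rewrite mxE.
  have wk : (a^-1 *: v) 0 k = u 0 k by rewrite mxE vk mulKf ?lt0r_neq0.
  have := eq_on_final_above (pos_vecZ a'0 vpos) uw wk (fZv _ a'0) cC.
  by rewrite mxE => <-; rewrite mulVKf ?lt0r_neq0.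
have vcb : v 0 c = b * u 0 c.
  have wu : le_vec (b^-1 *: v) u.
    by move=> i; rewrite mxE ler_pdivrMl //; have := vb i; rewrite mxE.
  have wl : (b^-1 *: v) 0 l = u 0 l by rewrite mxE vl mulKf ?lt0r_neq0.
  have := eq_on_final_below (pos_vecZ b'0 vpos) wu wl (fZv _ b'0) cC.
  by rewrite mxE => <-; rewrite mulVKf ?lt0r_neq0.
by exists a; exact: contacts_eq_scale (upos c) av vb vca vcb.
Qed.

End Eigenvectors.

Lemma exists_sqr_between (R : realFieldType) (a b : R) : 0 < a < b ->
  exists2 r, 0 < r < 1 & a < r * r * b.
Proof.
(* With q = a / b, r = (3 + q) / 4 gives r * r >= 2 r - 1 = (1 + q) / 2 > q. *)
case/andP=> a0 ab; have b0 := lt_trans a0 ab.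
pose q := a / b; have q0 : 0 < q by rewrite divr_gt0.
have q1 : q < 1 by rewrite ltr_pdivrMr // mul1r.
exists ((3 + q) / 4); first by apply/andP; split; lra.
by rewrite -[a](divfK (lt0r_neq0 b0)) -/q ltr_pM2r //; nra.
Qed.

Lemma cluster_often (T : topologicalType) (s : nat -> T) y (P : T -> Prop) :
  cluster (s @ \oo) y -> (\forall z \near y, P z) ->
  forall K, exists2 k, (K <= k)%N & P (s k).
Proof.
move=> cly yP K.
have sK : (s @ \oo) [set z | exists2 k, (K <= k)%N & z = s k].
  by exists K => // k /= Kk; exists k.
by have [_ [[k Kk ->] ?]] := cly _ _ sK yP; exists k.
Qed.

Section Convergence.
Variables (R : realType) (n : nat) (g : 'rV[R]_n -> 'rV[R]_n) (u : 'rV[R]_n).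
Hypotheses (gpos : maps_pos g) (gop : order_preserving g) (ghom : homogeneous g)
  (upos : pos_vec u) (gu : g u = u).
Variables (c : 'I_n) (p : nat).
(* After [p] steps a strict excess (or deficit) at [c] over the fixed point [u]
   reaches every coordinate; this is where primitivity enters. *)
Hypothesis push_up : forall y, pos_vec y -> le_vec u y -> u 0 c < y 0 c ->
  forall i, u 0 i < iter p g y 0 i.
Hypothesis push_down : forall y, pos_vec y -> le_vec y u -> y 0 c < u 0 c ->
  forall i, iter p g y 0 i < u 0 i.

Let lower_bound := iter_lower_bound gpos gop ghom upos gu.
Let upper_bound := iter_upper_bound gpos gop ghom upos gu.

Lemma lower_push y a : pos_vec y -> 0 < a ->
  le_vec (a *: u) y -> a * u 0 c < y 0 c ->
  exists2 th, a < th & le_vec (th *: u) (iter p g y).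
Proof.
move=> ypos a0 ay ayc; have a'0 : 0 < a^-1 by rewrite invr_gt0.
pose z := iter p g (a^-1 *: y).
have zpos : pos_vec z by apply/maps_pos_iter/pos_vecZ.
have uz i : u 0 i < z 0 i.
  apply: push_up; first exact: pos_vecZ.
    by move=> j; rewrite mxE ler_pdivlMl //; have := ay j; rewrite mxE.
  by rewrite mxE ltr_pdivlMl.
have [th [k [th0 thz zk]]] := lower_contact c upos zpos.
exists (a * th).
  by rewrite ltr_pMr // -(ltr_pM2r (upos k)) mul1r -zk.
rewrite -scalerA -[y](scalerKV (lt0r_neq0 a0)) homogeneous_iter //.
  exact: le_vecZ (ltW a0) thz.
exact: pos_vecZ.
Qed.

Lemma upper_push y b : pos_vec y -> 0 < b ->
  le_vec y (b *: u) -> y 0 c < b * u 0 c ->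
  exists2 th, th < b & le_vec (iter p g y) (th *: u).
Proof.
move=> ypos b0 yb ybc; have b'0 : 0 < b^-1 by rewrite invr_gt0.
pose z := iter p g (b^-1 *: y).
have zpos : pos_vec z by apply/maps_pos_iter/pos_vecZ.
have zu i : z 0 i < u 0 i.
  apply: push_down; first exact: pos_vecZ.
    by move=> j; rewrite mxE ler_pdivrMl //; have := yb j; rewrite mxE.
  by rewrite mxE ltr_pdivrMl.
have [th [k [th0 zth zk]]] := upper_contact c upos zpos.
exists (b * th).
  by rewrite gtr_pMr // -(ltr_pM2r (upos k)) mul1r -zk.
rewrite -scalerA -[y](scalerKV (lt0r_neq0 b0)) homogeneous_iter //.
  exact: le_vecZ (ltW b0) zth.
exact: pos_vecZ.
Qed.

Lemma cone_close_iter k r a y : 0 < r -> 0 < a -> pos_vec y ->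
  cone_close r (a *: u) y -> cone_close r (a *: u) (iter k g y).
Proof.
move=> r0 a0 ypos [lo hi]; split.
  by rewrite scalerA; apply: lower_bound; rewrite ?mulr_gt0 // -scalerA.
rewrite -homogeneous_iter //; apply: upper_bound => //; exact: pos_vecZ.
Qed.

Variable x : 'rV[R]_n.
Hypothesis xpos : pos_vec x.
Local Notation xs := (fun k => iter k g x).

Lemma cluster_iter : exists2 y, pos_vec y & cluster (xs @ \oo) y.
Proof.
have [a [_ [a0 ax _]]] := lower_contact c upos xpos.
have [b [_ [b0 xb _]]] := upper_contact c upos xpos.
pose seg i := `[a * u 0 i, b * u 0 i].
pose box := [set y : 'rV[R]_n | forall i, seg i (y ord0 i)].
have box_compact : compact box by apply: rV_compact => i; exact: segment_compact.
have xs_box : (xs @ \oo) box.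
  exists 0%N => // k _ i; rewrite /seg /= in_itv /=.
  have := lower_bound k a0 xpos ax i.
  have := upper_bound k b0 xpos xb i.
  by rewrite !mxE => -> ->.
have [y [ybox cly]] := box_compact _ _ xs_box; exists y => // i.
have := ybox i; rewrite /seg /= in_itv /= => /andP[+ _].
by apply: lt_le_trans; rewrite mulr_gt0.
Qed.

Section ClusterPoint.
Variable y : 'rV[R]_n.
Hypotheses (ypos : pos_vec y) (cly : cluster (xs @ \oo) y).

Lemma cluster_often_close r K : 0 < r < 1 ->
  exists2 k, (K <= k)%N & cone_close r y (iter k g x).
Proof. by move=> r01; exact: cluster_often cly (near_cone_close r01 ypos) K. Qed.

(* If [y] rose strictly above its lower contact line at [c], then [p] more
   steps would lift the whole orbit, and so [y], strictly above that line. *)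
Lemma cluster_lower_contact a k :
  0 < a -> le_vec (a *: u) y -> y 0 k = a * u 0 k -> y 0 c = a * u 0 c.
Proof.
move=> a0 ay yk; have ayc : a * u 0 c <= y 0 c by have := ay c; rewrite mxE.
apply/le_anti; rewrite ayc andbT leNgt.
apply/negP => /(lower_push ypos a0 ay)[th ath thy].
have [r r01 arth] : exists2 r, 0 < r < 1 & a < r * r * th.
  by apply: exists_sqr_between; rewrite a0 ath.
have /andP[r0 _] := r01.
have [k1 _ [yk1 _]] := cluster_often_close 0 r01.
have lo m : (p + k1 <= m)%N -> le_vec ((r * th) *: u) (iter m g x).
  move=> m_ge; rewrite -(subnK m_ge) iterD; apply: lower_bound => //.
  - by rewrite mulr_gt0 // (lt_trans a0).
  - exact: maps_pos_iter.
  rewrite iterD -scalerA; apply: le_vec_trans (le_vecZ (ltW r0) thy) _.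
  rewrite -homogeneous_iter //; apply: order_preserving_iter => //.
  - exact: (pos_vecZ r0 ypos).
  - exact: maps_pos_iter.
have [k2 k2_ge [_ yk2]] := cluster_often_close (p + k1) r01.
have := le_vec_trans (le_vecZ (ltW r0) (lo k2 k2_ge)) yk2 k.
by rewrite !mxE yk mulrA ler_pM2r // mulrA leNgt arth.
Qed.

Lemma cluster_upper_contact b k :
  0 < b -> le_vec y (b *: u) -> y 0 k = b * u 0 k -> y 0 c = b * u 0 c.
Proof.
move=> b0 yb yk; have ybc : y 0 c <= b * u 0 c by have := yb c; rewrite mxE.
apply/le_anti; rewrite ybc /= leNgt.
apply/negP => /(upper_push ypos b0 yb)[th thb yth].
have th0 : 0 < th.
  have := lt_le_trans (maps_pos_iter gpos p ypos c) (yth c).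
  by rewrite mxE pmulr_lgt0.
have [r r01 thrb] : exists2 r, 0 < r < 1 & th < r * r * b.
  by apply: exists_sqr_between; rewrite th0 thb.
have /andP[r0 _] := r01.
have [k1 _ [_ yk1]] := cluster_often_close 0 r01.
have hi m : (p + k1 <= m)%N -> le_vec (r *: iter m g x) (th *: u).
  have xs_pos j : pos_vec (iter j g x) by exact: maps_pos_iter.
  move=> m_ge; rewrite -(subnK m_ge) iterD -homogeneous_iter //.
  apply: upper_bound => //; first exact: pos_vecZ.
  rewrite iterD -homogeneous_iter //; apply: le_vec_trans yth.
  by apply: order_preserving_iter => //; exact: pos_vecZ.
have [k2 k2_ge [yk2 _]] := cluster_often_close (p + k1) r01.
have := le_vec_trans (le_vecZ (ltW r0) yk2) (hi k2 k2_ge) k.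
by rewrite !mxE yk !mulrA ler_pM2r // leNgt thrb.
Qed.

End ClusterPoint.

Lemma iter_cvg_scale : exists2 s, 0 < s & xs @ \oo --> s *: u.
Proof.
have [y ypos cly] := cluster_iter.
have [a [k [a0 ay yk]]] := lower_contact c upos ypos.
have [b [l [b0 yb yl]]] := upper_contact c upos ypos.
have ya : y = a *: u.
  apply: (contacts_eq_scale (upos c) ay yb).
    exact: (@cluster_lower_contact y ypos cly a k a0 ay yk).
  exact: (@cluster_upper_contact y ypos cly b l b0 yb yl).
exists a => //; apply: cone_close_cvg (pos_vecZ a0 upos) _ => r r01.
have /andP[r0 _] := r01.
have [k0 _ close0] := @cluster_often_close y ypos cly r 0%N r01; rewrite ya in close0.
exists k0 => // m /= k0m; rewrite -(subnK k0m) iterD.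
by apply: cone_close_iter => //; exact: maps_pos_iter.
Qed.
End Convergence.

Section PrimitiveFinalClass.
Variables (R : realType) (n : nat) (f : 'rV[R]_n -> 'rV[R]_n) (u : 'rV[R]_n) (lam : R).
Hypotheses (fpos : maps_pos f) (fop : order_preserving f) (fhom : homogeneous f)
  (upos : pos_vec u) (fu : f u = lam *: u) (df : differentiable f u).
Variable C : {set 'I_n}.
Hypotheses (Cfin : final_class (jac f u) C) (Cuniq : exists! C, final_class (jac f u) C)
  (Cprim : primitive_class (jac f u) C).

Lemma normalized_iter_cvg (N : 'rV[R]_n -> R) x : is_norm N -> N u = 1 -> pos_vec x ->
  (fun k => (N (iter k f x))^-1 *: iter k f x) @ \oo --> u.
Proof.
move=> HN Nu xpos; have [[[c cC] _ _] _] := Cfin.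
have lam0 : 0 < lam by have := fpos upos c; rewrite fu mxE pmulr_lgt0.
have lam'0 : 0 < lam^-1 by rewrite invr_gt0.
pose g y := lam^-1 *: f y.
have gpos : maps_pos g := maps_posZ lam'0 fpos.
have gop : order_preserving g := order_preservingZ lam'0 fop.
have ghom : homogeneous g := homogeneousZ lam^-1 fhom.
have gu : g u = u by rewrite /g fu scalerA mulVf ?scale1r ?lt0r_neq0.
have [p walk_p] := unique_final_primitive_walk Cfin Cuniq Cprim cC.
have [s s0 gx_s] : exists2 s, 0 < s & (fun k => iter k g x) @ \oo --> s *: u.
  apply: (iter_cvg_scale gpos gop ghom upos gu (c := c) (p := p)) xpos.
  - move=> y ypos uy uyc i.
    apply: (walk_iter_lt_up gpos gop upos gu _ (walk_p i)) => //.
    move=> k j z zpos uz akj uzj; rewrite -{1}gu !mxE ltr_pM2l //.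
    exact: jac_arc_lt_up akj uzj.
  - move=> y ypos yu yuc i.
    apply: (walk_iter_lt_down gpos gop upos gu _ (walk_p i)) => //.
    move=> k j z zpos zu akj zuj; rewrite -{1}gu !mxE ltr_pM2l //.
    exact: jac_arc_lt_down akj zuj.
have -> : (fun k => (N (iter k f x))^-1 *: iter k f x) =
          (fun k => (N (iter k g x))^-1 *: iter k g x).
  by apply: funext => k; rewrite iterZ // normalize_scale ?exprn_gt0.
have Nsu : N (s *: u) != 0 by rewrite normZ // Nu mulr1 gtr0_norm ?lt0r_neq0.
have := normalize_cvg HN Nsu gx_s; rewrite normalize_scale // Nu invr1 scale1r.
by apply; exact: _.
Qed.

End PrimitiveFinalClass.

Theorem theorem6p1 (R : realType) (n : nat) (N : 'rV[R]_n -> R)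
    (f : 'rV[R]_n -> 'rV[R]_n) (u : 'rV[R]_n) :
  is_norm N ->
  maps_pos f -> order_preserving f -> homogeneous f ->
  pos_eigenvector f u -> N u = 1 ->
  differentiable f u ->
  (exists! C : {set 'I_n}, final_class (jac f u) C) ->
  (forall v, pos_eigenvector f v -> exists t : R, v = t *: u) /\
  (forall C : {set 'I_n}, final_class (jac f u) C -> primitive_class (jac f u) C ->
     forall x, pos_vec x ->
       (fun k : nat => (N (iter k f x))^-1 *: iter k f x) @ \oo --> u).
Proof.
move=> HN fpos fop fhom [upos [lam fu]] Nu df Cuniq; split.
  have [C [Cfin _]] := Cuniq.
  exact: (pos_eigenvector_scale fop fhom upos fu df Cfin Cuniq).
move=> C Cfin Cprim x xpos.
exact: (normalized_iter_cvg fpos fop fhom upos fu df Cfin Cuniq Cprim HN Nu xpos).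
Qed.
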